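(* Let $d\geq 1$ and $n>d$ be integers, and let $\mathcal C(n,d)=\operatorname{conv}\{\mu_d(1),\dots,\mu_d(n)\}$ be the cyclic polytope, where $\mu_d(t)=(t,t^2,\dots,t^d)$. Let $\Delta$ and $\Delta'$ be two triangulations of (the vertex set of) $\mathcal C(n,d)$ which differ by a flip $[\Delta\rightsquigarrow\Delta']$. Then \[ \Delta\leq_1\Delta' \iff \begin{cases} \mathrm{gkz}_\Delta>_{\mathrm{lex}}\mathrm{gkz}_{\Delta'} & \text{if } d \text{ is even},\\ \mathrm{gkz}_\Delta<_{\mathrm{lex}}\mathrm{gkz}_{\Delta'} & \text{if } d \text{ is odd}.\end{cases} \]
   Context: A triangulation of a finite point configuration $P\subset\mathbb R^d$ is a subdivision of $\operatorname{conv}(P)$ into $d$-simplices whose vertices are points of $P$. A circuit is a minimally affinely dependent subset of $P$; for the vertex set of $\mathcal C(n,d)$ every circuit consists of $d+2$ vertices $\mu_d(t_1),\dots,\mu_d(t_{d+2})$ ($t_1<\dots<t_{d+2}$) and is combinatorially a cyclic polytope $\mathcal C(d+2,d)$, which has exactly two triangulations. These are obtained by projecting (forgetting the last coordinate) the lower facets, resp. the upper facets, of the $(d+1)$-simplex $\operatorname{conv}\{\mu_{d+1}(t_1),\dots,\mu_{d+1}(t_{d+2})\}$; they are called the lower and the upper triangulation of the circuit. Two triangulations $\Delta,\Delta'$ differ by a flip if they agree outside some circuit $C$ and, restricted to $C$, one of them is the lower and the other the upper triangulation of $C$. The flip $[\Delta\rightsquigarrow\Delta']$ is an up-flip if $\Delta$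 restricts to the lower and $\Delta'$ to the upper triangulation of $C$; then one writes $\Delta\leq_1\Delta'$. (The first higher Stasheff–Tamari order $\mathrm{HST}_1(n,d)$ is the reflexive–transitive closure of this relation.) For a triangulation $\Delta$ of the vertex set $\{\mu_d(1),\dots,\mu_d(n)\}$, its GKZ-vector is $\mathrm{gkz}_\Delta=(\mathrm{gkz}_\Delta(\mu_d(1)),\dots,\mathrm{gkz}_\Delta(\mu_d(n)))\in\mathbb R^n$ (vertices in the natural order along the moment curve), where $\mathrm{gkz}_\Delta(p)$ is the sum of the normalized volumes ($d!$ times Euclidean volume) of the simplices of $\Delta$ having $p$ as a vertex. $>_{\mathrm{lex}}$, $<_{\mathrm{lex}}$ denote the lexicographic order on $\mathbb R^n$. *)

From HB Require Import structures.
From mathcomp Require Import all_boot all_order all_algebra.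
From mathcomp Require Import reals.
Set Implicit Arguments. Unset Strict Implicit. Unset Printing Implicit Defensive.
Import Order.TTheory GRing.Theory Num.Theory.
Local Open Scope ring_scope.

Section Cyclic.
Variable R : realType.

Definition mu (d : nat) (t : R) : 'rV[R]_d := \row_(j < d) t ^+ j.+1.

(* the i-th point (i : 'I_n, 0-based) of C(n,d) is mu_d(i+1) *)
Definition pt (d n : nat) (i : 'I_n) : 'rV[R]_d := mu d (i.+1)%:R.

Variables d n : nat.

Definition in_conv (S : {set 'I_n}) (x : 'rV[R]_d) : Prop :=
  exists lam : 'I_n -> R,
    [/\ forall i, 0 <= lam i,
        forall i, i \notin S -> lam i = 0,
        \sum_i lam i = 1 &
        x = \sum_i lam i *: pt d i].

Definition aff_dep (S : {set 'I_n}) : Prop :=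
  exists lam : 'I_n -> R,
    [/\ forall i, i \notin S -> lam i = 0,
        \sum_i lam i = 0,
        \sum_i lam i *: pt d i = 0 &
        exists i, lam i != 0].

Definition circuit (C : {set 'I_n}) : Prop :=
  aff_dep C /\ forall S : {set 'I_n}, S \proper C -> ~ aff_dep S.

(* triangulation of the point configuration {pt i}: a set of d-simplices
   (affinely independent (d+1)-subsets) covering conv(P) and intersecting
   properly (conv s :&: conv t = conv (s :&: t)). *)
Definition triangulation (T : {set {set 'I_n}}) : Prop :=
  [/\ forall s, s \in T -> #|s| = d.+1 /\ ~ aff_dep s,
      forall x, in_conv setT x -> exists2 s, s \in T & in_conv s x &
      forall s t x, s \in T -> t \in T -> in_conv s x -> in_conv t x ->
        in_conv (s :&: t) x].

Definition lpt (i : 'I_n) : 'rV[R]_d.+1 := mu d.+1 (i.+1)%:R.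

Definition dotr (m : nat) (u v : 'rV[R]_m) : R := \sum_k u 0 k * v 0 k.

(* F is a lower (resp. upper) facet of the (d+1)-simplex conv{lpt i | i in C}:
   a supporting hyperplane {w.x = b} contains exactly the points of F, the
   remaining vertices lie strictly on the side of the inner normal w, and
   w has positive (resp. negative) last coordinate. *)
Definition lower_facet (C F : {set 'I_n}) : Prop :=
  [/\ F \subset C, #|F| = d.+1 &
   exists (w : 'rV[R]_d.+1) (b : R),
     [/\ 0 < w 0 ord_max,
         forall i, i \in F -> dotr w (lpt i) = b &
         forall i, i \in C :\: F -> b < dotr w (lpt i)]].

Definition upper_facet (C F : {set 'I_n}) : Prop :=
  [/\ F \subset C, #|F| = d.+1 &
   exists (w : 'rV[R]_d.+1) (b : R),
     [/\ w 0 ord_max < 0,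
         forall i, i \in F -> dotr w (lpt i) = b &
         forall i, i \in C :\: F -> b < dotr w (lpt i)]].

(* up-flip D ~> D' on the circuit C: D restricts to the lower triangulation
   of C, D' to the upper one, and they agree outside C. *)
Definition up_flip_on (C : {set 'I_n}) (D D' : {set {set 'I_n}}) : Prop :=
  [/\ circuit C,
      forall s : {set 'I_n}, s \subset C -> (s \in D <-> lower_facet C s),
      forall s : {set 'I_n}, s \subset C -> (s \in D' <-> upper_facet C s) &
      forall s : {set 'I_n}, ~~ (s \subset C) -> (s \in D) = (s \in D')].

Definition up_flip (D D' : {set {set 'I_n}}) : Prop :=
  exists C, up_flip_on C D D'.

Definition differ_by_flip (D D' : {set {set 'I_n}}) : Prop :=
  up_flip D D' \/ up_flip D' D.

(* normalized volume (d! * Euclidean volume) of the simplex with vertex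
   set s (#|s| = d+1): |det| of the (d+1)x(d+1) matrix with rows (1, pt i). *)
Definition nvol (s : {set 'I_n}) : R :=
  let rows := [seq pt d i | i <- enum s] in
  `| \det (\matrix_(k < d.+1, l < d.+1)
            match unlift ord0 l with
            | Some l' => (nth 0 rows k) 0 l'
            | None => 1
            end) |.

Definition gkz (T : {set {set 'I_n}}) (i : 'I_n) : R :=
  \sum_(s in T | i \in s) nvol s.

Definition lexlt (a b : 'I_n -> R) : Prop :=
  exists i : 'I_n, (forall j : 'I_n, (j < i)%N -> a j = b j) /\ a i < b i.

End Cyclic.

(* Order a circuit of the moment curve as t_0 < ... < t_(d+1) and let c_k be
   the signed cofactors of its Vandermonde matrix along the column of
   (d+1)-st powers.  For every polynomial p of degree at most d+1,
   sum_k c_k p(t_k) is the leading coefficient of p times the (positive)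
   Vandermonde determinant.  Applying this to the height of the lifted points
   above a facet hyperplane of the lifted simplex shows that C \ {t_k} is a
   lower facet exactly when c_k > 0, and an upper one when c_k < 0; the
   normalized volume of that facet is |c_k|.  The coordinates of the GKZ
   vectors before t_0 agree, while at t_0 the lower minus the upper
   triangulation gives sum_(k > 0) c_k = - c_0, whose sign is (-1)^d.  The
   converse implication follows from the asymmetry of the lexicographic
   order. *)

From HB Require Import structures.
From mathcomp Require Import all_boot all_order all_algebra.
From mathcomp Require Import reals.
Set Implicit Arguments. Unset Strict Implicit. Unset Printing Implicit Defensive.
Import Order.TTheory GRing.Theory Num.Theory.
Local Open Scope ring_scope.

Definition vdm (R : pzRingType) m (x : 'I_m -> R) : 'M[R]_m := \matrix_(i, j) x i ^+ j.

Section VandermondeCofactors.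
Variables (R : comNzRingType) (m : nat) (x : 'I_m.+1 -> R).

Definition vdm_cofactor (k : 'I_m.+1) : R :=
  (-1) ^+ (k + m) * \det (vdm (x \o lift k)).

Lemma expand_vdm_last_col (g : 'I_m.+1 -> R) :
  \det (\matrix_(k, l) if l == ord_max then g k else x k ^+ l) =
  \sum_k vdm_cofactor k * g k.
Proof.
rewrite (expand_det_col _ ord_max); apply: eq_bigr => k _.
rewrite mxE eqxx mulrC /cofactor /vdm_cofactor; congr (_ * \det _ * _).
by apply/matrixP => i j; rewrite !mxE lift_eqF lift_max.
Qed.

Lemma sum_vdm_cofactor_exp l : (l <= m)%N ->
  \sum_k vdm_cofactor k * x k ^+ l = (l == m)%:R * \det (vdm x).
Proof.
rewrite -(expand_vdm_last_col (fun k => x k ^+ l)) leq_eqVlt.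
case/predU1P => [-> | lm]; rewrite ?eqxx ?mul1r.
  by congr (\det _); apply/matrixP => i j; rewrite !mxE; case: eqP => [-> |].
rewrite (ltn_eqF lm) mul0r -det_tr.
have l_ne_max : (inord l == ord_max :> 'I_m.+1) = false.
  by rewrite -val_eqE /= inordK ?(ltn_eqF lm) // ltnW.
apply: (determinant_alternate (i1 := ord_max) (i2 := inord l)).
  by rewrite eq_sym l_ne_max.
by move=> k; rewrite !mxE eqxx l_ne_max inordK // ltnW.
Qed.

Lemma sum_vdm_cofactor_horner (p : {poly R}) : (size p <= m.+1)%N ->
  \sum_k vdm_cofactor k * p.[x k] = p`_m * \det (vdm x).
Proof.
move=> szp; under eq_bigr do rewrite (horner_coef_wide _ szp) mulr_sumr.
rewrite exchange_big.
transitivity (\sum_(l < m.+1) p`_l * ((l == m :> nat)%:R * \det (vdm x))).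
  apply: eq_bigr => l _.
  rewrite -(sum_vdm_cofactor_exp (ltn_ord l)) mulr_sumr.
  by apply: eq_bigr => k _; rewrite mulrCA.
rewrite big_ord_recr /= eqxx mul1r big1 ?add0r // => l _.
by rewrite (ltn_eqF (ltn_ord l)) mul0r mulr0.
Qed.

Lemma sum_vdm_cofactor : (0 < m)%N -> \sum_k vdm_cofactor k = 0.
Proof.
move=> m_gt0; have := sum_vdm_cofactor_exp (leq0n m).
by rewrite eq_sym (gtn_eqF m_gt0) mul0r; under eq_bigr do rewrite mulr1.
Qed.

End VandermondeCofactors.

Lemma det_vdm_gt0 (R : numDomainType) m (x : 'I_m -> R) :
  (forall i j : 'I_m, (i < j)%N -> x i < x j) -> 0 < \det (vdm x).
Proof.
move=> x_incr; rewrite -det_tr.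
have -> : (vdm x)^T = Vandermonde m (\row_j x j).
  by apply/matrixP => i j; rewrite !mxE.
rewrite det_Vandermonde; apply: prodr_gt0 => i _; apply: prodr_gt0 => j ij.
by rewrite !mxE subr_gt0 x_incr.
Qed.

Lemma ltn_lift m (k : 'I_m.+1) (i j : 'I_m) : (lift k i < lift k j)%N = (i < j)%N.
Proof. by rewrite /= !ltnNge leq_bump2. Qed.

Lemma sorted_enum_ord_set n (A : {set 'I_n}) : sorted ltn (map val (enum A)).
Proof.
rewrite -[enum _](eq_filter (mem_enum _)) -(eq_filter (mem_map val_inj _)).
by rewrite -filter_map (sorted_filter ltn_trans) // unlock val_ord_enum iota_ltn_sorted.
Qed.

Definition node (R : nzSemiRingType) n (i : 'I_n) : R := i.+1%:R.

Section MomentCurve.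
Context {R : realType} {d n : nat}.
Local Notation node := (@node R n).

Lemma node_lt (i j : 'I_n) : (i < j)%N -> node i < node j.
Proof. by rewrite ltr_nat ltnS. Qed.

Lemma node_inj : injective node.
Proof. by move=> i j /eqP; rewrite eqr_nat eqSS => /eqP /val_inj. Qed.

Lemma moment_dependence (lam : 'I_n -> R) :
  (\sum_i lam i = 0 /\ \sum_i lam i *: pt R d i = 0) <->
  (forall q : {poly R}, (size q <= d.+1)%N -> \sum_i lam i * q.[node i] = 0).
Proof.
have coord (j : 'I_d) :
    (\sum_i lam i *: pt R d i) 0 j = \sum_i lam i * node i ^+ j.+1.
  by rewrite summxE; apply: eq_bigr => i _; rewrite !mxE.
split=> [[sum0 sum_pt0] q szq | annihilated].
  under eq_bigr do rewrite (horner_coef_wide _ szq) mulr_sumr.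
  rewrite exchange_big big1 // => l _.
  transitivity (q`_l * \sum_i lam i * node i ^+ l).
    by rewrite mulr_sumr; apply: eq_bigr => i _; rewrite mulrCA.
  case: l => [[|j] ltjd] /=.
    by under eq_bigr do rewrite expr0 mulr1; rewrite sum0 mulr0.
  by rewrite -(coord (Ordinal (ltjd : (j < d)%N))) sum_pt0 mxE mulr0.
split.
  rewrite -[RHS](annihilated 1) ?size_poly1 //.
  by apply: eq_bigr => i _; rewrite hornerC mulr1.
apply/rowP => j; rewrite coord mxE -[RHS](annihilated 'X^(j.+1)) ?size_polyXn ?ltnS //.
by apply: eq_bigr => i _; rewrite hornerXn.
Qed.

(* A nonzero dependence supported on at most [d + 1] points is killed by the
   polynomial of degree at most [d] vanishing on all of them but one. *)
Lemma aff_dep_card (S : {set 'I_n}) : aff_dep R d S -> (d.+2 <= #|S|)%N.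
Proof.
case=> lam [lam_out sum0 sum_pt0 [i0 lam_i0]]; rewrite leqNgt; apply/negP => ltSd.
have i0S : i0 \in S by apply: contraNT lam_i0 => /lam_out ->.
pose q := \prod_(z <- [seq node i | i <- enum (S :\ i0)]) ('X - z%:P).
have szq : (size q <= d.+1)%N.
  rewrite size_prod_XsubC size_map -cardE.
  by move: ltSd; rewrite (cardsD1 i0) i0S.
have /(_ q szq) := (moment_dependence lam).1 (conj sum0 sum_pt0).
rewrite (bigD1 i0) //= big1 ?addr0 => [|i i_ne_i0].
  apply/eqP; rewrite mulf_neq0 // -/(root q _) root_prod_XsubC.
  apply/mapP => -[j]; rewrite mem_enum !inE => /andP[j_ne_i0 _] /node_inj ej.
  by rewrite ej eqxx in j_ne_i0.
have [iS | /lam_out ->] := boolP (i \in S); last by rewrite mul0r.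
apply/eqP; rewrite mulf_eq0 -/(root q _) root_prod_XsubC; apply/orP; right.
by apply/mapP; exists i; rewrite // mem_enum !inE i_ne_i0.
Qed.

(* [(height_poly w b).[t]] is the height [w . mu_(d+1)(t) - b] of the lifted
   point [mu_(d+1)(t)] relative to the hyperplane [w . y = b]. *)
Definition height_poly (w : 'rV[R]_d.+1) (b : R) : {poly R} :=
  \poly_(i < d.+2) (if i is j.+1 then w 0 (inord j) else - b).

Lemma horner_height_poly w b i :
  (height_poly w b).[node i] = dotr w (lpt R d i) - b.
Proof.
rewrite horner_poly big_ord_recl /= expr0 mulr1 addrC /dotr; congr (_ + _).
by apply: eq_bigr => j _; rewrite /lpt /mu mxE inord_val mulrC.
Qed.

Lemma height_poly_lead w b : (height_poly w b)`_d.+1 = w 0 ord_max.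
Proof.
by rewrite coef_poly ltnSn; congr (w 0 _); apply: val_inj; rewrite /= inordK.
Qed.

Lemma height_poly_onto (p : {poly R}) : (size p <= d.+2)%N ->
  exists w b, height_poly w b = p.
Proof.
move=> szp; exists (\row_j p`_j.+1), (- p`_0); apply/polyP => i.
rewrite coef_poly; case: ltnP => [|le_szi]; last first.
  by rewrite nth_default // (leq_trans szp).
by case: i => [|j] ltjd; rewrite ?opprK // mxE inordK.
Qed.

Lemma nvol_sorted (s : {set 'I_n}) (f : 'I_d.+1 -> 'I_n) :
  enum s = map f (enum 'I_d.+1) -> (forall i j : 'I_d.+1, (i < j)%N -> (f i < f j)%N) ->
  nvol R d s = \det (vdm (node \o f)).
Proof.
rewrite /nvol => -> f_incr; rewrite -map_comp.
set M := \matrix_(_, _) _; have -> : M = vdm (node \o f).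
  apply/matrixP => i l; rewrite !mxE (nth_map i) ?size_enum_ord // nth_ord_enum.
  by case: unliftP => [l' ->|->]; rewrite ?expr0 // /pt /mu mxE.
rewrite ger0_norm // ltW // det_vdm_gt0 // => i j ij.
by rewrite node_lt ?f_incr.
Qed.

End MomentCurve.

Section Circuit.
Context {R : realType} {d n : nat} {C : {set 'I_n}}.
Hypothesis card_C : #|C| = d.+2.

Definition cvert (k : 'I_d.+2) : 'I_n := enum_val (cast_ord (esym card_C) k).

Local Notation cnode := (@node R n \o cvert).
Local Notation cof := (vdm_cofactor cnode).

Lemma cvert_in k : cvert k \in C.
Proof. exact: enum_valP. Qed.

Lemma cvert_inj : injective cvert.
Proof. by move=> i j /enum_val_inj /(congr1 val) /= /val_inj. Qed.

Lemma cvert_lt (i j : 'I_d.+2) : (i < j)%N -> (cvert i < cvert j)%N.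
Proof.
move=> ij; have size_C : size (enum C) = d.+2 by rewrite -cardE.
rewrite /cvert !(enum_val_nth (cvert i)).
rewrite -!(nth_map (cvert i) 0%N (@nat_of_ord n)) ?size_C /=.
apply: (sorted_ltn_nth ltn_trans _ (sorted_enum_ord_set C)) => //.
all: by rewrite ?inE ?size_map ?size_C /= ltn_ord.
Qed.

Lemma cvert_onto c : c \in C -> exists k, c = cvert k.
Proof.
move=> cC; exists (cast_ord card_C (enum_rank_in cC c)).
by rewrite /cvert cast_ordK enum_rankK_in.
Qed.

Lemma det_vdm_cnode_gt0 : 0 < \det (vdm cnode).
Proof. by apply: det_vdm_gt0 => i j ij; rewrite node_lt ?cvert_lt. Qed.

Lemma det_vdm_minor_gt0 k : 0 < \det (vdm (cnode \o lift k)).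
Proof. by apply: det_vdm_gt0 => i j ij; rewrite node_lt ?cvert_lt ?ltn_lift. Qed.

Lemma normr_cof k : `|cof k| = \det (vdm (cnode \o lift k)).
Proof. by rewrite normrMsign ger0_norm // ltW // det_vdm_minor_gt0. Qed.

Lemma cof_neq0 k : cof k != 0.
Proof. by rewrite -normr_eq0 normr_cof gt_eqF // det_vdm_minor_gt0. Qed.

Lemma setD1_cvertP k i :
  reflect (exists j, i = cvert (lift k j)) (i \in C :\ cvert k).
Proof.
apply: (iffP idP) => [|[j ->]]; last first.
  by rewrite !inE cvert_in (inj_eq cvert_inj) eq_sym neq_lift.
rewrite !inE => /andP[i_ne_k /cvert_onto[k' def_i]]; subst i.
by case: (unliftP k k') i_ne_k => [j ->|->]; [exists j | rewrite eqxx].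
Qed.

Lemma enum_setD1_cvert k :
  enum (C :\ cvert k) = map (cvert \o lift k) (enum 'I_d.+1).
Proof.
have ltn_val_trans : transitive (relpre (@nat_of_ord n) ltn).
  by move=> ? ? ?; apply: ltn_trans.
apply: (irr_sorted_eq ltn_val_trans (fun i => ltnn i)).
- by rewrite -sorted_map sorted_enum_ord_set.
- have : sorted ltn (map val (enum 'I_d.+1)) by rewrite val_enum_ord iota_ltn_sorted.
  rewrite !sorted_map; apply: sub_sorted => i j /= ij.
  by rewrite cvert_lt ?ltn_lift.
- move=> i; rewrite mem_enum; apply/setD1_cvertP/mapP => [[j ->]|[j _ ->]].
    by exists j; rewrite ?mem_enum.
  by exists j.
Qed.

Lemma nvol_setD1_cvert k : nvol R d (C :\ cvert k) = `|cof k|.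
Proof.
rewrite normr_cof (nvol_sorted (enum_setD1_cvert k)) // => i j ij.
by rewrite cvert_lt ?ltn_lift.
Qed.

Lemma setD1_cvert_inj : injective (fun k => C :\ cvert k).
Proof.
move=> k k' /setP/(_ (cvert k')); rewrite !inE eqxx cvert_in andbT /=.
by rewrite (inj_eq cvert_inj) => /negbFE/eqP.
Qed.

Lemma card_setD1_cvert k : #|C :\ cvert k| = d.+1.
Proof. by have := cardsD1 (cvert k) C; rewrite cvert_in card_C => -[]. Qed.

Lemma subset_setD1_cvert (s : {set 'I_n}) :
  s \subset C -> #|s| = d.+1 -> exists k, s = C :\ cvert k.
Proof.
move=> sC card_s; have [c cC c_notin_s] : exists2 c, c \in C & c \notin s.
  apply/subsetPn; apply: contraTN isT => /subset_leq_card.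
  by rewrite card_C card_s ltnn.
have [k def_c] := cvert_onto cC; exists k; subst c.
apply/eqP; rewrite eqEcard card_setD1_cvert card_s leqnn andbT.
apply/subsetP => i i_s; rewrite !inE (subsetP sC) // andbT.
by apply: contraNneq c_notin_s => <-.
Qed.

Lemma setDD1_cvert k : C :\: (C :\ cvert k) = [set cvert k].
Proof.
by apply/setP => i; rewrite !inE; case: eqP => [->|_] /=; rewrite ?cvert_in ?andNb.
Qed.

(* Weighting the heights of the lifted circuit by the cofactors kills every
   coefficient of the height polynomial but the leading one. *)
Lemma cof_mul_height k (w : 'rV[R]_d.+1) b :
  (forall i, i \in C :\ cvert k -> dotr w (lpt R d i) = b) ->
  cof k * (dotr w (lpt R d (cvert k)) - b) = w 0 ord_max * \det (vdm cnode).
Proof.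
move=> on_facet; rewrite -(height_poly_lead w b) -sum_vdm_cofactor_horner ?size_poly //.
rewrite (bigD1 k) //= big1 ?addr0 ?horner_height_poly // => k' k'_ne_k.
rewrite horner_height_poly on_facet ?subrr ?mulr0 //.
by rewrite !inE cvert_in (inj_eq cvert_inj) k'_ne_k.
Qed.

Lemma facet_normal_circuit (s : {set 'I_n}) (w : 'rV[R]_d.+1) b :
  s \subset C -> #|s| = d.+1 ->
  (forall i, i \in s -> dotr w (lpt R d i) = b) ->
  (forall i, i \in C :\: s -> b < dotr w (lpt R d i)) ->
  exists2 k, s = C :\ cvert k & 0 < cof k * w 0 ord_max.
Proof.
move=> sC card_s on_s above_s; have [k def_s] := subset_setD1_cvert sC card_s.
exists k => //; subst s.
have height_gt0 : 0 < dotr w (lpt R d (cvert k)) - b.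
  by rewrite subr_gt0 above_s // setDD1_cvert set11.
rewrite -(pmulr_lgt0 _ det_vdm_cnode_gt0) -mulrA -(cof_mul_height on_s).
by rewrite mulrA pmulr_lgt0 // lt_def sqrf_eq0 cof_neq0 sqr_ge0.
Qed.

Lemma circuit_facet_normal k : exists (w : 'rV[R]_d.+1) b,
  [/\ w 0 ord_max = cof k,
      forall i, i \in C :\ cvert k -> dotr w (lpt R d i) = b &
      forall i, i \in C :\: (C :\ cvert k) -> b < dotr w (lpt R d i)].
Proof.
pose Q := \prod_(z <- [seq cnode (lift k j) | j <- enum 'I_d.+1]) ('X - z%:P).
have size_Q : size Q = d.+2 by rewrite size_prod_XsubC size_map size_enum_ord.
have Q_root j : Q.[cnode (lift k j)] = 0.
  by apply/rootP; rewrite root_prod_XsubC; apply/mapP; exists j; rewrite ?mem_enum.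
have [w [b def_wb]] : exists (w : 'rV[R]_d.+1) b, height_poly w b = cof k *: Q.
  by apply: height_poly_onto; rewrite (leq_trans (size_scale_leq _ _)) ?size_Q.
have w_max : w 0 ord_max = cof k.
  have : lead_coef Q = 1 := lead_coef_prod_XsubC _ _ _.
  by rewrite lead_coefE size_Q -(height_poly_lead w b) def_wb coefZ => ->; rewrite mulr1.
have on_facet i : i \in C :\ cvert k -> dotr w (lpt R d i) = b.
  case/setD1_cvertP => j ->; apply/eqP; rewrite -subr_eq0 -horner_height_poly.
  by rewrite def_wb hornerZ /= Q_root mulr0.
exists w, b; split => // i; rewrite setDD1_cvert => /set1P ->.
have := cof_mul_height on_facet; rewrite w_max => /(mulfI (cof_neq0 k)) height_k.
by rewrite -subr_gt0 height_k det_vdm_cnode_gt0.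
Qed.

Lemma lower_facet_circuit (s : {set 'I_n}) : s \subset C ->
  lower_facet R d C s <-> exists2 k, s = C :\ cvert k & 0 < cof k.
Proof.
move=> sC; split=> [[_ card_s [w [b [w_pos on_s above_s]]]] | [k -> cof_pos]].
  have [k def_s sign_k] := facet_normal_circuit sC card_s on_s above_s.
  by exists k; rewrite // -(pmulr_lgt0 _ w_pos).
have [w [b [w_max on_s above_s]]] := circuit_facet_normal k.
by split; [exact: subD1set | exact: card_setD1_cvert | exists w, b; rewrite w_max].
Qed.

Lemma upper_facet_circuit (s : {set 'I_n}) : s \subset C ->
  upper_facet R d C s <-> exists2 k, s = C :\ cvert k & cof k < 0.
Proof.
move=> sC; split=> [[_ card_s [w [b [w_neg on_s above_s]]]] | [k -> cof_neg]].
  have [k def_s sign_k] := facet_normal_circuit sC card_s on_s above_s.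
  by exists k; rewrite // -(nmulr_lgt0 _ w_neg).
have [w [b [w_max on_s above_s]]] := circuit_facet_normal k.
by split; [exact: subD1set | exact: card_setD1_cvert | exists w, b; rewrite w_max].
Qed.

Lemma gkz_first_cvert (T : {set {set 'I_n}}) (P : pred 'I_d.+2) :
  (forall s : {set 'I_n}, s \subset C -> s \in T <-> exists2 k, s = C :\ cvert k & P k) ->
  gkz R d T (cvert ord0) =
    \sum_(s | (s \in T) && (cvert ord0 \in s) && ~~ (s \subset C)) nvol R d s
    + \sum_(k | (k != ord0) && P k) `|cof k|.
Proof.
move=> T_on_C; rewrite /gkz (bigID (fun s : {set 'I_n} => s \subset C)) /= addrC; congr (_ + _).
rewrite (eq_bigl (mem [set C :\ cvert k | k in [pred k | (k != ord0) && P k]])).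
  rewrite big_imset /=; last by move=> k k' _ _; apply: setD1_cvert_inj.
  by apply: eq_bigr => k _; rewrite nvol_setD1_cvert.
move=> s; apply/idP/imsetP => [/andP[/andP[sT s_first] sC] | [k]].
  have [k def_s Pk] := (T_on_C s sC).1 sT; exists k => //; rewrite inE Pk andbT.
  by apply: contraNneq (negbT (negbF s_first)) => k0; rewrite def_s k0 setD11.
rewrite inE => /andP[k_ne0 Pk] ->; have sC := subD1set C (cvert k).
rewrite sC andbT ((T_on_C _ sC).2 (ex_intro2 _ _ k erefl Pk)) !inE cvert_in.
by rewrite (inj_eq cvert_inj) eq_sym k_ne0.
Qed.

Lemma cvert0_le c : c \in C -> (cvert ord0 <= c)%N.
Proof.
by case/cvert_onto => k ->; case: (unliftP ord0 k) => [k' ->|-> //]; exact/ltnW/cvert_lt.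
Qed.

Lemma gkz_before_cvert0 (T T' : {set {set 'I_n}}) (j : 'I_n) :
  (forall s : {set 'I_n}, ~~ (s \subset C) -> (s \in T) = (s \in T')) ->
  (j < cvert ord0)%N -> gkz R d T j = gkz R d T' j.
Proof.
move=> agree j_lt; apply: eq_bigl => s.
have [j_s | _] := boolP (j \in s); last by rewrite !andbF.
rewrite !andbT agree //; apply: contraL j_lt.
by rewrite -leqNgt => /subsetP/(_ j j_s)/cvert0_le.
Qed.

(* The alternating signs of the cofactors make the facets missing [cvert k]
   alternate between lower and upper, and the cofactors sum to zero. *)
Lemma gkz_up_flip_cvert0 (D D' : {set {set 'I_n}}) : up_flip_on R d C D D' ->
  gkz R d D (cvert ord0) - gkz R d D' (cvert ord0) = - cof ord0.
Proof.
case=> _ lower_D upper_D' agree.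
rewrite (gkz_first_cvert (fun s sC => iff_trans (lower_D s sC) (lower_facet_circuit sC))).
rewrite (gkz_first_cvert (fun s sC => iff_trans (upper_D' s sC) (upper_facet_circuit sC))).
have -> : \sum_(s | (s \in D) && (cvert ord0 \in s) && ~~ (s \subset C)) nvol R d s
        = \sum_(s | (s \in D') && (cvert ord0 \in s) && ~~ (s \subset C)) nvol R d s.
  by apply: eq_bigl => s; case sC: (s \subset C); rewrite ?andbF //= agree ?sC.
rewrite opprD addrACA subrr add0r.
have -> : \sum_(k | (k != ord0) && (0 < cof k)) `|cof k|
        = \sum_(k | (k != ord0) && (0 < cof k)) cof k.
  by apply: eq_bigr => k /andP[_ /gtr0_norm].
have -> : \sum_(k | (k != ord0) && (cof k < 0)) `|cof k|
        = - \sum_(k | (k != ord0) && ~~ (0 < cof k)) cof k.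
  rewrite -sumrN; apply: eq_big => [k | k /andP[_ /ltr0_norm] //].
  by rewrite -leNgt le_eqVlt (negbTE (cof_neq0 k)).
rewrite opprK -bigID /=; have := sum_vdm_cofactor cnode (ltn0Sn d).
by rewrite (bigD1 ord0) //= => /eqP; rewrite addrC addr_eq0 => /eqP.
Qed.

Lemma up_flip_on_lex (D D' : {set {set 'I_n}}) : up_flip_on R d C D D' ->
  if odd d then lexlt (gkz R d D) (gkz R d D') else lexlt (gkz R d D') (gkz R d D).
Proof.
move=> flip; have gkz_diff := gkz_up_flip_cvert0 flip.
have below (j : 'I_n) : (j < cvert ord0)%N -> gkz R d D j = gkz R d D' j.
  by case: flip => _ _ _; apply: gkz_before_cvert0.
have sign_cof0 : - cof ord0 = (-1) ^+ d * `|cof ord0|.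
  by rewrite normr_cof /vdm_cofactor /= add0n exprS mulN1r mulNr opprK.
have cof0_gt0 : 0 < `|cof ord0| by rewrite normr_gt0 cof_neq0.
case: ifP => odd_d; exists (cvert ord0); split.
- by move=> j /below.
- by rewrite -subr_lt0 gkz_diff sign_cof0 -signr_odd odd_d expr1 mulN1r oppr_lt0.
- by move=> j /below.
- by rewrite -subr_gt0 gkz_diff sign_cof0 -signr_odd odd_d expr0 mul1r.
Qed.

Lemma aff_dep_of_card : aff_dep R d C.
Proof.
pose lam i := \sum_(k | cvert k == i) cof k.
have sum_lam (g : 'I_n -> R) : \sum_i lam i * g i = \sum_k cof k * g (cvert k).
  rewrite [RHS](partition_big cvert predT) //=; apply: eq_bigr => i _.
  by rewrite mulr_suml; apply: eq_bigr => k /eqP <-.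
have annihilated (q : {poly R}) : (size q <= d.+1)%N -> \sum_i lam i * q.[node R i] = 0.
  move=> size_q; rewrite sum_lam sum_vdm_cofactor_horner ?(leq_trans size_q) //.
  by rewrite nth_default ?mul0r.
have [sum0 sum_pt0] := (moment_dependence lam).2 annihilated.
exists lam; split=> //.
  move=> i i_notin_C; rewrite /lam big_pred0 // => k.
  by apply: contraNF i_notin_C => /eqP <-; exact: cvert_in.
exists (cvert ord0); rewrite /lam (big_pred1 ord0) ?cof_neq0 // => k.
exact: (inj_eq cvert_inj).
Qed.

End Circuit.

Lemma circuit_card (R : realType) d n (C : {set 'I_n}) :
  circuit R d C -> #|C| = d.+2.
Proof.
case=> dep minimal; apply/eqP; rewrite eqn_leq (aff_dep_card dep) andbT leqNgt.
apply/negP => card_gt; pose S := [set x in take d.+2 (enum C)].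
have card_S : #|S| = d.+2.
  rewrite cardsE (card_uniqP (take_uniq _ (enum_uniq (mem C)))).
  by rewrite size_takel // -cardE ltnW.
apply: (minimal S); last exact: aff_dep_of_card card_S.
rewrite properEcard card_S card_gt andbT; apply/subsetP => x.
by rewrite inE => /mem_take; rewrite mem_enum.
Qed.

Lemma lexlt_asym (R : realType) n (a b : 'I_n -> R) : lexlt a b -> ~ lexlt b a.
Proof.
case=> i [eq_ab lt_ab] [j [eq_ba lt_ba]].
case: (ltngtP i j) => [ij | ji | /val_inj eij].
- by move: lt_ab; rewrite eq_ba // ltxx.
- by move: lt_ba; rewrite eq_ab // ltxx.
- by subst j; move: (lt_trans lt_ab lt_ba); rewrite ltxx.
Qed.

Lemma up_flip_lex (R : realType) d n (D D' : {set {set 'I_n}}) :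
  up_flip R d D D' ->
  if odd d then lexlt (gkz R d D) (gkz R d D') else lexlt (gkz R d D') (gkz R d D).
Proof.
case=> C flip; have [circ _ _ _] := flip.
by have := up_flip_on_lex (circuit_card circ) flip.
Qed.

Unset Implicit Arguments.

Theorem proposition1 (R : realType) (d n : nat) (hd : (1 <= d)%N) (hn : (d < n)%N)
  (D D' : {set {set 'I_n}}) :
  triangulation R d D -> triangulation R d D' -> differ_by_flip R d D D' ->
  (up_flip R d D D' <->
   (if odd d then lexlt (gkz R d D) (gkz R d D')
    else lexlt (gkz R d D') (gkz R d D))).
Proof.
move=> _ _ flip; split=> [|lex]; first exact: up_flip_lex.
case: flip => // down; have := up_flip_lex down.
by case: (odd d) lex => lex /(lexlt_asym lex).
Qed.
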